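(* On the cofree conilpotent cooperad $\mathcal{T}^c(M)$, the map $d_\psi H+Hd_\psi$ is zero in arity $1$ and is the identity in every arity $n\ge2$.
   Context: $M$ is the $\mathbb{S}$-module spanned by two arity-2 elements with trivial $\mathbb{S}_2$-action, $\mu$ of degree $1$ and $\beta$ of degree $2$. $\mathcal{T}^c(M)$ is spanned by rooted binary trees with leaves labeled $1,\dots,n$ and vertices decorated by $\mu$ or $\beta$ (arity 1 being spanned by the trivial tree); vertices are totally ordered via the planar (shuffle tree) representation, and Koszul signs refer to this order. Let $\psi:\mathcal{T}^c(M)\to M$ project onto $M$ and send $\mu\mapsto\beta$, $\beta\mapsto0$; its unique coderivation extension $d_\psi$ sends a decorated tree to the signed sum over its $\mu$-vertices of the tree with that $\mu$ replaced by $\beta$. For a binary tree $T$ and vertex $v$, let $m_v,n_v$ be the numbers of leaves above the two inputs of $v$, and $\omega(v)=m_vn_v$. Let $h:M\to M$ send $\beta\mapsto\mu$, $\mu\mapsto 0$. Define $H$ (degree $-1$) on a decorated tree with $n$ vertices as $\sum_v\frac{\omega(v)}{\binom{n+1}{2}}$ times the tree with $h$ applied to the decoration of $v$, with the Koszul sign. *)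

From mathcomp Require Import all_boot all_order all_algebra.
Set Implicit Arguments. Unset Strict Implicit. Unset Printing Implicit Defensive.
Import Order.TTheory GRing.Theory Num.Theory.
Local Open Scope ring_scope.

Inductive deco := Mu | Be.

Definition deco_deg (d : deco) : nat := if d is Mu then 1%N else 2%N.

(** Planar binary trees with labelled leaves and decorated internal vertices.
    A basis element of T^c(M)(n) is represented by its shuffle (planar)
    representative, see [valid_tree]. *)
Inductive tree := Leaf of nat | Node of deco & tree & tree.

Fixpoint tree_eqb (s t : tree) : bool :=
  match s, t with
  | Leaf i, Leaf j => i == j
  | Node d l r, Node d' l' r' =>
      [&& (deco_deg d == deco_deg d'), tree_eqb l l' & tree_eqb r r']
  | _, _ => false
  end.

Fixpoint leaf_labels (t : tree) : seq nat :=
  match t with Leaf i => [:: i] | Node _ l r => leaf_labels l ++ leaf_labels r end.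

Fixpoint nleaves (t : tree) : nat :=
  match t with Leaf _ => 1%N | Node _ l r => (nleaves l + nleaves r)%N end.

Fixpoint nvert (t : tree) : nat :=
  match t with Leaf _ => 0%N | Node _ l r => (nvert l + nvert r).+1 end.

Fixpoint min_leaf (t : tree) : nat :=
  match t with Leaf i => i | Node _ l r => minn (min_leaf l) (min_leaf r) end.

Fixpoint shuffle_tree (t : tree) : bool :=
  match t with
  | Leaf _ => true
  | Node _ l r => [&& (min_leaf l < min_leaf r)%N, shuffle_tree l & shuffle_tree r]
  end.

Definition valid_tree (n : nat) (t : tree) : bool :=
  perm_eq (leaf_labels t) (iota 1 n) && shuffle_tree t.

Fixpoint tree_deg (t : tree) : nat :=
  match t with Leaf _ => 0%N | Node d l r => (deco_deg d + tree_deg l + tree_deg r)%N end.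

Definition lc := seq (rat * tree).

Definition coef (x : lc) (S : tree) : rat :=
  \sum_(p <- x | tree_eqb p.2 S) p.1.

Definition sgn (k : nat) : rat := (-1) ^+ k.

(** Apply an odd-degree map f at each vertex (vertices totally ordered by the
    pre-order traversal of the planar representative: root, left subtree,
    right subtree), with the Koszul sign (-1)^(degrees of earlier vertices).
    [f d l r] is the (coefficient, new decoration) produced at a vertex
    decorated d with inputs l and r, or None if the map kills it. *)
Fixpoint at_each (f : deco -> tree -> tree -> option (rat * deco)) (t : tree) : lc :=
  match t with
  | Leaf _ => [::]
  | Node d l r =>
      (if f d l r is Some (c, d') then [:: (c, Node d' l r)] else [::])
      ++ [seq (sgn (deco_deg d) * q.1, Node d q.2 r) | q <- at_each f l]
      ++ [seq (sgn (deco_deg d + tree_deg l) * q.1, Node d l q.2) | q <- at_each f r]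
  end.

Definition dpsi_tree (t : tree) : lc :=
  at_each (fun d _ _ => if d is Mu then Some (1, Be) else None) t.

Definition omega (l r : tree) : nat := (nleaves l * nleaves r)%N.

Definition H_tree (t : tree) : lc :=
  at_each (fun d l r => if d is Be
             then Some ((omega l r)%:R / ('C(nvert t + 1, 2))%:R, Mu)
             else None) t.

Definition lin (g : tree -> lc) (x : lc) : lc :=
  flatten [seq [seq (p.1 * q.1, q.2) | q <- g p.2] | p <- x].

Definition dpsi (x : lc) : lc := lin dpsi_tree x.
Definition Hmap (x : lc) : lc := lin H_tree x.

(** d_psi H + H d_psi (sum of formal combinations = concatenation). *)
Definition dH_Hd (x : lc) : lc := dpsi (Hmap x) ++ Hmap (dpsi x).

From mathcomp Require Import all_boot all_order all_algebra.
From mathcomp Require Import zify ring.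
Set Implicit Arguments. Unset Strict Implicit. Unset Printing Implicit Defensive.
Import Order.TTheory GRing.Theory Num.Theory.
Local Open Scope ring_scope.

(** Both d_psi and H modify one vertex of a decorated tree at a time
    ([at_each]), with Koszul signs, and both change the degree of that vertex
    by one.

    Replacing the normalising constant binom(n+1, 2) of H by an arbitrary
    constant c gives an operator H_c, and the key identity, proved by
    induction on the tree, is
        (d_psi H_c + H_c d_psi) t = (total_omega t / c) t,
    where total_omega t is the sum of omega(v) over the vertices of t.  At a
    node, the terms where the two maps act in different subtrees cancel (the
    later map sees the Koszul sign twisted by one degree), the terms inside a
    single subtree are the induction hypotheses, and the terms involving the
    root add up to omega(root).  Since total_omega t = binom(#leaves, 2) and
    #leaves = #vertices + 1 = n, the factor is 1 for n >= 2 and 0 for n = 1. *)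

Definition lc_eval (y : lc) (F : tree -> rat) : rat := \sum_(p <- y) p.1 * F p.2.

Lemma lc_eval0 (y : lc) : lc_eval y (fun=> 0) = 0.
Proof. by rewrite /lc_eval big1 // => p _; rewrite mulr0. Qed.

Lemma lc_eval_cat (x y : lc) F : lc_eval (x ++ y) F = lc_eval x F + lc_eval y F.
Proof. by rewrite /lc_eval big_cat. Qed.

Lemma lc_eval_in (y : lc) (P : pred tree) F F' :
  all (fun p => P p.2) y -> (forall q, P q -> F q = F' q) ->
  lc_eval y F = lc_eval y F'.
Proof.
move=> + eqF; rewrite /lc_eval; elim: y => [|p y IH] /=; first by rewrite !big_nil.
by case/andP=> Pp Py; rewrite !big_cons eqF // IH.
Qed.

Lemma eq_lc_eval (y : lc) F F' : F =1 F' -> lc_eval y F = lc_eval y F'.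
Proof. by move=> eqF; apply: (@lc_eval_in _ predT) => [|q _]; rewrite ?all_predT. Qed.

Lemma lc_evalZ (y : lc) k F : lc_eval y (fun q => k * F q) = k * lc_eval y F.
Proof. by rewrite /lc_eval mulr_sumr; apply: eq_bigr => p _; rewrite mulrCA. Qed.

Lemma lc_evalD (y : lc) F F' :
  lc_eval y (fun q => F q + F' q) = lc_eval y F + lc_eval y F'.
Proof. by rewrite /lc_eval -big_split; apply: eq_bigr => p _; rewrite mulrDr. Qed.

Lemma lc_eval_const (y : lc) (h : tree -> rat) k F :
  all (fun p => h p.2 == k) y -> lc_eval y (fun q => h q * F q) = k * lc_eval y F.
Proof.
move=> yh; rewrite -lc_evalZ.
by apply: (lc_eval_in (P := fun q => h q == k)) yh _ => q /eqP ->.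
Qed.

Lemma lc_eval_swap (x y : lc) (K : tree -> tree -> rat) :
  lc_eval x (fun q => lc_eval y (K q)) = lc_eval y (fun u => lc_eval x (K^~ u)).
Proof.
rewrite /lc_eval; under eq_bigr do rewrite mulr_sumr.
rewrite exchange_big /=; apply: eq_bigr => q _; rewrite mulr_sumr.
by apply: eq_bigr => p _; rewrite mulrCA.
Qed.

Lemma lc_eval_lin (g : tree -> lc) (x : lc) F :
  lc_eval (lin g x) F = lc_eval x (fun t => lc_eval (g t) F).
Proof.
elim: x => [|p x IH]; first by rewrite /lc_eval /lin !big_nil.
rewrite /lin /= lc_eval_cat -/(lin g x) IH /lc_eval big_cons big_map mulr_sumr.
by congr (_ + _); apply: eq_bigr => q _; rewrite mulrA.
Qed.

Lemma coef_lc_eval (x : lc) S :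
  coef x S = lc_eval x (fun T => if tree_eqb T S then 1 else 0).
Proof.
rewrite /coef /lc_eval big_mkcond /=; apply: eq_bigr => p _.
by case: tree_eqb; rewrite ?mulr1 ?mulr0.
Qed.

Lemma sgnD a b : sgn (a + b) = sgn a * sgn b.
Proof. exact: exprD. Qed.

Lemma sgn1 : sgn 1 = -1. Proof. by []. Qed.

Lemma sgn2 : sgn 2 = 1. Proof. by rewrite /sgn expr2 mulN1r opprK. Qed.

Lemma sgn_odd k : sgn k = if odd k then -1 else 1.
Proof. by rewrite /sgn -signr_odd; case: odd. Qed.

Lemma lc_eval_node f d l r F : lc_eval (at_each f (Node d l r)) F =
  (if f d l r is Some (c, d') then c * F (Node d' l r) else 0)
  + sgn (deco_deg d) * lc_eval (at_each f l) (fun q => F (Node d q r))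
  + sgn (deco_deg d + tree_deg l) * lc_eval (at_each f r) (fun u => F (Node d l u)).
Proof.
rewrite /= !lc_eval_cat /lc_eval !big_map !mulr_sumr addrA; congr (_ + _ + _).
- by case: (f d l r) => [[c d']|]; rewrite ?big_cons ?big_nil ?addr0.
- by apply: eq_bigr => p _; rewrite mulrA.
- by apply: eq_bigr => p _; rewrite mulrA.
Qed.

Definition odd_vertex_map (f : deco -> tree -> tree -> option (rat * deco)) : Prop :=
  forall d l r c d', f d l r = Some (c, d') -> odd (deco_deg d') = ~~ odd (deco_deg d).

Definition odd_modification (t q : tree) : bool :=
  [&& odd (tree_deg q) == ~~ odd (tree_deg t),
      nleaves q == nleaves t & nvert q == nvert t].

Lemma at_each_odd_modification f t : odd_vertex_map f ->
  all (fun p => odd_modification t p.2) (at_each f t).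
Proof.
rewrite /odd_modification => hf; elim: t => [i|d l IHl r IHr] //=.
rewrite !all_cat; apply/and3P; split.
- case E: (f d l r) => [[c d']|] //=; rewrite andbT !eqxx !andbT /=.
  by rewrite !oddD (hf _ _ _ _ _ E) !addNb.
- rewrite all_map; apply: sub_all IHl => p /and3P[/eqP h1 /eqP h2 /eqP h3] /=.
  by rewrite !oddD h1 h2 h3 !addbN !addNb !eqxx.
- rewrite all_map; apply: sub_all IHr => p /and3P[/eqP h1 /eqP h2 /eqP h3] /=.
  by rewrite !oddD h1 h2 h3 !addbN !eqxx.
Qed.

Section OddVertexMap.
Variable f : deco -> tree -> tree -> option (rat * deco).
Hypothesis hf : odd_vertex_map f.

(** Acting once more flips the Koszul sign seen by a later vertex. *)
Lemma lc_eval_at_each_sgn k t F :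
  lc_eval (at_each f t) (fun q => sgn (k + tree_deg q) * F q)
  = - sgn (k + tree_deg t) * lc_eval (at_each f t) F.
Proof.
apply: lc_eval_const; apply: sub_all (at_each_odd_modification t hf).
move=> p /and3P[/eqP hodd _ _]; rewrite !sgnD !(sgn_odd (tree_deg _)) hodd.
by apply/eqP; case: odd; rewrite /= mulrN ?opprK.
Qed.

(** The weight omega at a vertex only depends on the numbers of leaves. *)
Lemma lc_eval_at_each_omegaL c t r F :
  lc_eval (at_each f t) (fun q => (omega q r)%:R / c * F q)
  = (omega t r)%:R / c * lc_eval (at_each f t) F.
Proof.
apply: lc_eval_const; apply: sub_all (at_each_odd_modification t hf).
by move=> p /and3P[_ /eqP hleaves _]; rewrite /omega hleaves.
Qed.

Lemma lc_eval_at_each_omegaR c l t F :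
  lc_eval (at_each f t) (fun q => (omega l q)%:R / c * F q)
  = (omega l t)%:R / c * lc_eval (at_each f t) F.
Proof.
apply: lc_eval_const; apply: sub_all (at_each_odd_modification t hf).
by move=> p /and3P[_ /eqP hleaves _]; rewrite /omega hleaves.
Qed.

End OddVertexMap.

Definition dpsi_vertex : deco -> tree -> tree -> option (rat * deco) :=
  fun d _ _ => if d is Mu then Some (1, Be) else None.

(** H with a fixed normalising constant [c] in place of binom(n+1, 2). *)
Definition H_vertex (c : rat) : deco -> tree -> tree -> option (rat * deco) :=
  fun d l r => if d is Be then Some ((omega l r)%:R / c, Mu) else None.

Lemma dpsi_vertex_odd : odd_vertex_map dpsi_vertex.
Proof. by case=> l r c d' //= [_ <-]. Qed.

Lemma H_vertex_odd c : odd_vertex_map (H_vertex c).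
Proof. by case=> l r c' d' //= [_ <-]. Qed.

Fixpoint total_omega (t : tree) : nat :=
  match t with
  | Leaf _ => 0%N
  | Node _ l r => (omega l r + total_omega l + total_omega r)%N
  end.

Definition homotopy_defect (c : rat) (t : tree) (G : tree -> rat) : rat :=
  lc_eval (at_each (H_vertex c) t) (fun q => lc_eval (at_each dpsi_vertex q) G)
  + lc_eval (at_each dpsi_vertex t) (fun q => lc_eval (at_each (H_vertex c) q) G).

Section HomotopyIdentity.
Variable c : rat.

Lemma dpsi_node_Mu l r F : lc_eval (at_each dpsi_vertex (Node Mu l r)) F =
  F (Node Be l r)
  + sgn 1 * lc_eval (at_each dpsi_vertex l) (fun q => F (Node Mu q r))
  + sgn (1 + tree_deg l) * lc_eval (at_each dpsi_vertex r) (fun u => F (Node Mu l u)).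
Proof. by rewrite lc_eval_node /= mul1r. Qed.

Lemma dpsi_node_Be l r F : lc_eval (at_each dpsi_vertex (Node Be l r)) F =
  sgn 2 * lc_eval (at_each dpsi_vertex l) (fun q => F (Node Be q r))
  + sgn (2 + tree_deg l) * lc_eval (at_each dpsi_vertex r) (fun u => F (Node Be l u)).
Proof. by rewrite lc_eval_node /= add0r. Qed.

Lemma H_node_Mu l r F : lc_eval (at_each (H_vertex c) (Node Mu l r)) F =
  sgn 1 * lc_eval (at_each (H_vertex c) l) (fun q => F (Node Mu q r))
  + sgn (1 + tree_deg l) * lc_eval (at_each (H_vertex c) r) (fun u => F (Node Mu l u)).
Proof. by rewrite lc_eval_node /= add0r. Qed.

Lemma H_node_Be l r F : lc_eval (at_each (H_vertex c) (Node Be l r)) F =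
  (omega l r)%:R / c * F (Node Mu l r)
  + sgn 2 * lc_eval (at_each (H_vertex c) l) (fun q => F (Node Be q r))
  + sgn (2 + tree_deg l) * lc_eval (at_each (H_vertex c) r) (fun u => F (Node Be l u)).
Proof. by rewrite lc_eval_node. Qed.

Lemma homotopy_defect_node d l r G :
  (forall G, homotopy_defect c l G = (total_omega l)%:R / c * G l) ->
  (forall G, homotopy_defect c r G = (total_omega r)%:R / c * G r) ->
  homotopy_defect c (Node d l r) G
  = (total_omega (Node d l r))%:R / c * G (Node d l r).
Proof.
move=> IHl IHr.
have DHl := canRL (addrK _) (etrans (addrC _ _) (IHl (fun q => G (Node d q r)))).
have DHr := canRL (addrK _) (etrans (addrC _ _) (IHr (fun u => G (Node d l u)))).
(* the mixed terms act on different subtrees in the two orders *)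
have swapl := lc_eval_swap (at_each (H_vertex c) r) (at_each dpsi_vertex l)
  (fun u q => G (Node d q u)).
have swapr := lc_eval_swap (at_each dpsi_vertex r) (at_each (H_vertex c) l)
  (fun u q => G (Node d q u)).
rewrite /homotopy_defect in DHl DHr *.
case: d DHl DHr swapl swapr => DHl DHr swapl swapr.
- rewrite H_node_Mu dpsi_node_Mu H_node_Be.
  rewrite (eq_lc_eval _ (fun q => dpsi_node_Mu q r G)).
  rewrite (eq_lc_eval _ (fun u => dpsi_node_Mu l u G)).
  rewrite (eq_lc_eval _ (fun q => H_node_Mu q r G)).
  rewrite (eq_lc_eval _ (fun u => H_node_Mu l u G)).
  rewrite !lc_evalD !lc_evalZ !(lc_eval_at_each_sgn dpsi_vertex_odd).
  rewrite !(lc_eval_at_each_sgn (@H_vertex_odd c)).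
  rewrite swapl swapr DHl DHr.
  by rewrite /= !natrD !sgnD sgn1 sgn2 sgn_odd; case: odd; ring.
- rewrite H_node_Be dpsi_node_Be dpsi_node_Mu.
  rewrite (eq_lc_eval _ (fun q => dpsi_node_Be q r G)).
  rewrite (eq_lc_eval _ (fun u => dpsi_node_Be l u G)).
  rewrite (eq_lc_eval _ (fun q => H_node_Be q r G)).
  rewrite (eq_lc_eval _ (fun u => H_node_Be l u G)).
  rewrite !lc_evalD !lc_evalZ !(lc_eval_at_each_sgn dpsi_vertex_odd).
  rewrite !(lc_eval_at_each_sgn (@H_vertex_odd c)).
  rewrite (lc_eval_at_each_omegaL dpsi_vertex_odd) (lc_eval_at_each_omegaR dpsi_vertex_odd).
  rewrite swapl swapr DHl DHr.
  by rewrite /= !natrD !sgnD sgn1 sgn2 sgn_odd; case: odd; ring.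
Qed.

Lemma homotopy_defect_total_omega t G :
  homotopy_defect c t G = (total_omega t)%:R / c * G t.
Proof.
elim: t G => [i|d l IHl r IHr] G; last exact: homotopy_defect_node.
by rewrite /homotopy_defect /lc_eval /= !big_nil addr0 mulr0n !mul0r.
Qed.

End HomotopyIdentity.

Lemma binom2D a b : 'C(a + b, 2) = ('C(a, 2) + 'C(b, 2) + a * b)%N.
Proof.
elim: b => [|b IH]; first by rewrite addn0 bin0n muln0 !addn0.
by rewrite addnS !binS !bin1 IH; lia.
Qed.

(** Each pair of leaves is separated at exactly one vertex, their meet. *)
Lemma total_omega_binom t : total_omega t = 'C(nleaves t, 2).
Proof. by elim: t => [i|d l IHl r IHr] //=; rewrite binom2D IHl IHr /omega; lia. Qed.

Lemma nleaves_nvert t : nleaves t = (nvert t + 1)%N.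
Proof. by elim: t => [i|d l IHl r IHr] //=; lia. Qed.

Lemma valid_tree_nleaves n t : valid_tree n t -> nleaves t = n.
Proof.
have size_labels : size (leaf_labels t) = nleaves t.
  by elim: t => [i|d l IHl r IHr] //=; rewrite size_cat IHl IHr.
by case/andP=> /perm_size; rewrite size_labels size_iota.
Qed.

(** On a single tree H uses the constant binom(n+1, 2) with n = #vertices;
    d_psi preserves the number of vertices, so both composites use the same
    constant and the homotopy identity applies. *)
Lemma dH_Hd_tree t G :
  lc_eval (H_tree t) (fun q => lc_eval (dpsi_tree q) G)
  + lc_eval (dpsi_tree t) (fun q => lc_eval (H_tree q) G)
  = (total_omega t)%:R / ('C(nvert t + 1, 2))%:R * G t.
Proof.
rewrite -homotopy_defect_total_omega /homotopy_defect; congr (_ + _).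
apply: (lc_eval_in (P := odd_modification t)).
  exact: at_each_odd_modification dpsi_vertex_odd.
by move=> q /and3P[_ _ /eqP hvert]; rewrite /H_tree hvert.
Qed.

Theorem lemma2p3 (n : nat) (hn : (1 <= n)%N) (x : lc)
  (hx : all (fun p => valid_tree n p.2) x) (S : tree) :
  coef (dH_Hd x) S = (if (2 <= n)%N then coef x S else 0).
Proof.
set I : tree -> rat := fun T => if tree_eqb T S then 1 else 0.
rewrite !coef_lc_eval -/I /dH_Hd lc_eval_cat /dpsi /Hmap !lc_eval_lin -lc_evalD.
have on_basis t : valid_tree n t -> lc_eval (H_tree t) (fun q => lc_eval (dpsi_tree q) I)
    + lc_eval (dpsi_tree t) (fun q => lc_eval (H_tree q) I)
    = (if (2 <= n)%N then I t else 0).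
  move=> /valid_tree_nleaves hleaves.
  rewrite dH_Hd_tree total_omega_binom -nleaves_nvert hleaves.
  case: ifP => n2; first by rewrite divff ?mul1r // pnatr_eq0 -lt0n bin_gt0.
  by rewrite (_ : n = 1%N) ?bin_small ?mul0r //; lia.
rewrite (lc_eval_in hx on_basis).
by case: ifP => _ //; rewrite lc_eval0.
Qed.
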